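(* Let $n\ge1$, $\eta>0$, $C\in\mathbb{R}_+^{n\times n}$, $q'\in\Delta_n$ and $p'\in\Delta_n$ with all entries positive. For $i=1,\dots,n$ define $\phi_i:\mathbb{R}^n\to\mathbb{R}$ by $$\phi_i(\lambda)=np_i'\Big[-\langle q',\lambda\rangle-\eta\log p_i'+\eta\log\Big(\sum_{j=1}^n\exp((\lambda_j-C_{i,j}-\eta)/\eta)\Big)+\eta\Big].$$ Then $\phi_i$ is $\frac{np_i'}{\eta}$-smooth w.r.t. $\|\cdot\|_2$ and $\frac{5np_i'}{\eta}$-smooth w.r.t. $\|\cdot\|_\infty$.
   Context: $\Delta_n=\{a\in\mathbb{R}_+^n: a^T\mathbf 1=1\}$. A convex differentiable function $g$ is $\beta$-smooth w.r.t. a norm $\|\cdot\|_H$ if $\|\nabla g(x)-\nabla g(y)\|_{H,*}\le\beta\|x-y\|_H$ for all $x,y$, where $\|u\|_{H,*}=\max\{\langle u,v\rangle:\|v\|_H\le1\}$ (so the dual norm of $\|\cdot\|_\infty$ is $\|\cdot\|_1$). *)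

From HB Require Import structures.
From mathcomp Require Import all_boot all_order all_algebra.
From mathcomp Require Import all_classical all_reals all_analysis.
Set Implicit Arguments. Unset Strict Implicit. Unset Printing Implicit Defensive.
Import Order.TTheory GRing.Theory Num.Theory.
Import numFieldNormedType.Exports.
Local Open Scope classical_set_scope.
Local Open Scope ring_scope.

Definition dotv (R : realType) (n : nat) (u v : 'rV[R]_n) : R :=
  \sum_(j < n) u 0 j * v 0 j.

Definition norm2 (R : realType) (n : nat) (x : 'rV[R]_n) : R :=
  Num.sqrt (\sum_(j < n) x 0 j ^+ 2).

Definition norminf (R : realType) (n : nat) (x : 'rV[R]_n) : R :=
  \big[Num.max/0]_(j < n) `|x 0 j|.

Definition dual_norm (R : realType) (n : nat) (N : 'rV[R]_n -> R)
    (u : 'rV[R]_n) : R :=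
  sup [set dotv u v | v in [set v | N v <= 1]].

Definition grad (R : realType) (n : nat) (g : 'rV[R]_n -> R) (x : 'rV[R]_n)
    : 'rV[R]_n :=
  \row_(j < n) 'D_(delta_mx 0 j) g x.

Definition convex_fun (R : realType) (n : nat) (g : 'rV[R]_n -> R) : Prop :=
  forall (x y : 'rV[R]_n) (t : R), 0 <= t -> t <= 1 ->
    g (t *: x + (1 - t) *: y) <= t * g x + (1 - t) * g y.

Definition smooth_wrt (R : realType) (n : nat) (N : 'rV[R]_n -> R) (beta : R)
    (g : 'rV[R]_n -> R) : Prop :=
  [/\ convex_fun g,
      (forall x, differentiable g x) &
      (forall x y, dual_norm N (grad g x - grad g y) <= beta * N (x - y))].

Definition in_simplex (R : realType) (n : nat) (a : 'rV[R]_n) : Prop :=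
  (forall j, 0 <= a 0 j) /\ \sum_(j < n) a 0 j = 1.

Definition phi (R : realType) (n : nat) (eta : R) (C : 'M[R]_n)
    (q p : 'rV[R]_n) (i : 'I_n) (lam : 'rV[R]_n) : R :=
  n%:R * p 0 i *
    (- dotv q lam - eta * ln (p 0 i)
     + eta * ln (\sum_(j < n) expR ((lam 0 j - C i j - eta) / eta))
     + eta).

From Pilot Require Import Defs.
From HB Require Import structures.
From mathcomp Require Import all_boot all_order all_algebra.
From mathcomp Require Import all_classical all_reals all_analysis.
From mathcomp Require Import ring lra.
Set Implicit Arguments. Unset Strict Implicit. Unset Printing Implicit Defensive.
Import Order.TTheory GRing.Theory Num.Theory.
Import numFieldNormedType.Exports.
Local Open Scope classical_set_scope.
Local Open Scope ring_scope.

(** Up to an affine term, [phi_i] is [n p_i eta lse(logit lam)] with [logit]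
    affine of slope [1/eta], so its gradient is [n p_i (softmax (logit lam) - q)].
    The derivative of [t |-> <softmax (b + t g), v>] is the covariance of [v]
    and [g] under the probability vector [softmax (b + t g)]; hence, by the mean
    value theorem on the segment from [logit y] to [logit x],
    [<grad phi_i x - grad phi_i y, v> = n p_i / eta * Cov_s(v, x - y)] for some
    probability vector [s]. A covariance is at most [|v|_2 |g|_2] (weighted
    Cauchy-Schwarz, and the variance is at most the second moment) and at most
    [2 |v|_oo |g|_oo]. Convexity of [phi_i] is convexity of log-sum-exp. *)

Section Derivatives.
Context {R : numFieldType} {V W : normedModType R}.

Lemma is_derive_line (f : V -> W) (x v : V) (d : W) :
  is_derive (0 : R) 1 (fun t => f (t *: v + x)) d -> is_derive x v f d.
Proof.
have quotE : (fun h : R => h^-1 *: ((f \o shift x) (h *: v) - f x)) =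
    (fun h => h^-1 *: (((fun t => f (t *: v + x)) \o shift 0) (h *: 1)
                       - f (0 *: v + x))).
  by apply/funext => h /=; rewrite addr0 scale0r add0r [_ *: 1]mulr1.
by case=> dv dE; split; rewrite /derivable /derive quotE.
Qed.

Lemma is_derive_sumr m (h : 'I_m -> V -> W) (dh : 'I_m -> W) (x v : V) :
  (forall k, is_derive x v (h k) (dh k)) ->
  is_derive x v (fun y => \sum_(k < m) h k y) (\sum_(k < m) dh k).
Proof. by move=> /is_derive_sum; rewrite -fct_sumE. Qed.

Lemma differentiable_sumr m (h : 'I_m -> V -> W) (x : V) :
  (forall k, differentiable (h k) x) -> differentiable (fun y => \sum_(k < m) h k y) x.
Proof. by move=> /differentiable_sum; rewrite -fct_sumE. Qed.
End Derivatives.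

Lemma is_derive_affine {R : numFieldType} (a c t : R) :
  is_derive t 1 (fun s => a + c * s) c.
Proof.
have H : is_derive t 1 (cst a + c \*: id) (0 + c *: 1) by exact: is_deriveD.
by rewrite add0r [c *: 1]mulr1 in H.
Qed.

Section Dot.
Variables (R : realType) (n : nat).
Implicit Types (u v : 'rV[R]_n).

Lemma dotvDr u v v' : dotv u (v + v') = dotv u v + dotv u v'.
Proof. by rewrite /dotv -big_split; apply: eq_bigr => k _; rewrite mxE mulrDr. Qed.

Lemma dotvZr a u v : dotv u (a *: v) = a * dotv u v.
Proof. by rewrite /dotv mulr_sumr; apply: eq_bigr => k _; rewrite mxE mulrCA. Qed.

Lemma dotvBl u u' v : dotv (u - u') v = dotv u v - dotv u' v.
Proof. by rewrite /dotv -sumrB; apply: eq_bigr => k _; rewrite !mxE mulrBl. Qed.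

Lemma dotvZl a u v : dotv (a *: u) v = a * dotv u v.
Proof. by rewrite /dotv mulr_sumr; apply: eq_bigr => k _; rewrite mxE mulrA. Qed.

Lemma dotv_delta u j : dotv u (delta_mx 0 j) = u 0 j.
Proof.
rewrite /dotv (bigD1 j) //= big1 => [|k /negbTE kj]; rewrite mxE ?kj ?eqxx ?mulr0 //.
by rewrite mulr1 addr0.
Qed.

Lemma differentiable_dotv u v : differentiable (dotv u) v.
Proof.
apply: differentiable_sumr => k.
exact/differentiableM/differentiable_coord.
Qed.
End Dot.

Section Norms.
Variables (R : realType) (n : nat).
Implicit Types (u v : 'rV[R]_n).

Lemma norm20 : norm2 (0 : 'rV[R]_n) = 0.
Proof. by rewrite /norm2 big1 ?sqrtr0 // => k _; rewrite mxE expr0n. Qed.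

Lemma norminf0 : norminf (0 : 'rV[R]_n) = 0.
Proof.
rewrite /norminf; elim/big_ind: _ => // [x y -> ->|k _]; first exact: maxxx.
by rewrite mxE normr0.
Qed.

Lemma norm2_sqr v : norm2 v ^+ 2 = \sum_(k < n) v 0 k ^+ 2.
Proof. by rewrite sqr_sqrtr // sumr_ge0 // => k _; exact: sqr_ge0. Qed.

Lemma norminf_entry v k : `|v 0 k| <= norminf v.
Proof. exact: (le_bigmax _ (fun k => `|v 0 k|)). Qed.

Lemma norminf_ge0 v : 0 <= norminf v.
Proof. exact: bigmax_ge_id. Qed.

Lemma dual_norm_le (N : 'rV[R]_n -> R) u (B : R) :
  N 0 <= 1 -> (forall v, N v <= 1 -> dotv u v <= B) -> dual_norm N u <= B.
Proof.
move=> N0 uB; apply: ge_sup; first by exists (dotv u 0), 0.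
by move=> _ [v vN <-]; exact: uB.
Qed.
End Norms.

Section Covariance.
Variables (R : realType) (n : nat).
Implicit Types (s v g : 'rV[R]_n).

Lemma weighted_cauchy_schwarz (s a b : 'I_n -> R) : (forall k, 0 <= s k) ->
  (\sum_(k < n) s k * (a k * b k)) ^+ 2 <=
  (\sum_(k < n) s k * a k ^+ 2) * (\sum_(k < n) s k * b k ^+ 2).
Proof.
move=> s0; rewrite -subr_ge0.
have lagrange : \sum_(k < n) \sum_(l < n) s k * s l * (a k * b l - a l * b k) ^+ 2 =
    (\sum_(k < n) s k * a k ^+ 2) * (\sum_(l < n) s l * b l ^+ 2) +
    (\sum_(l < n) s l * a l ^+ 2) * (\sum_(k < n) s k * b k ^+ 2) -
    (\sum_(k < n) s k * (a k * b k)) * (\sum_(l < n) s l * (a l * b l)) *+ 2.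
  rewrite !big_distrlr /= [X in _ + X - _]exchange_big /= -big_split /= -sumrMnl -sumrB.
  apply: eq_bigr => k _; rewrite -big_split /= -sumrMnl -sumrB.
  by apply: eq_bigr => l _; ring.
have : 0 <= \sum_(k < n) \sum_(l < n) s k * s l * (a k * b l - a l * b k) ^+ 2.
  by do 2!apply: sumr_ge0 => ? _; rewrite mulr_ge0 ?sqr_ge0 ?mulr_ge0.
by rewrite lagrange -expr2; lra.
Qed.

Definition cov s v g :=
  \sum_(k < n) s 0 k * (v 0 k * g 0 k) - dotv s v * dotv s g.

Lemma covZr s v g a : cov s v (a *: g) = a * cov s v g.
Proof.
rewrite /cov dotvZr mulrBr [a * (_ * _)]mulrCA; congr (_ - _).
by rewrite mulr_sumr; apply: eq_bigr => k _; rewrite mxE; ring.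
Qed.

Lemma cov_centered s v g :
  cov s v g = \sum_(k < n) s 0 k * ((v 0 k - dotv s v) * g 0 k).
Proof.
rewrite /cov [dotv s g]/dotv mulr_sumr -sumrB.
by apply: eq_bigr => k _; ring.
Qed.

Lemma simplex_le1 s k : in_simplex s -> s 0 k <= 1.
Proof.
case=> s0 <-; rewrite (bigD1 k) //= lerDl.
by apply: sumr_ge0 => l _.
Qed.

Lemma cov_norminf_le s v g : in_simplex s -> norminf v <= 1 ->
  `|cov s v g| <= 2 * norminf g.
Proof.
move=> [s0 s1] v1; have vk k : `|v 0 k| <= 1 := le_trans (norminf_entry v k) v1.
have m1 : `|dotv s v| <= 1.
  rewrite -s1; apply: le_trans (ler_norm_sum _ _ _) _; apply: ler_sum => k _.
  by rewrite normrM ger0_norm // ler_piMr.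
rewrite cov_centered -[2 * _]mul1r -s1 mulr_suml.
apply: le_trans (ler_norm_sum _ _ _) _; apply: ler_sum => k _.
rewrite !normrM ger0_norm // ler_wpM2l //.
apply: ler_pM; rewrite ?normr_ge0 ?norminf_entry //.
by apply: le_trans (ler_normB _ _) _; have := vk k; lra.
Qed.

Lemma variance_le_sum_sqr s v : in_simplex s ->
  \sum_(k < n) s 0 k * (v 0 k - dotv s v) ^+ 2 <= \sum_(k < n) v 0 k ^+ 2.
Proof.
move=> [s0 s1]; set m := dotv s v.
have -> : \sum_(k < n) s 0 k * (v 0 k - m) ^+ 2 =
    \sum_(k < n) s 0 k * v 0 k ^+ 2 - m ^+ 2.
  transitivity (\sum_(k < n) (s 0 k * v 0 k ^+ 2 - 2 * m * (s 0 k * v 0 k)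
                               + m ^+ 2 * s 0 k)).
    by apply: eq_bigr => k _; ring.
  by rewrite big_split sumrB /= -!mulr_sumr s1 -/(dotv s v) -/m; ring.
have : \sum_(k < n) s 0 k * v 0 k ^+ 2 <= \sum_(k < n) v 0 k ^+ 2.
  by apply: ler_sum => k _; rewrite ler_piMl ?sqr_ge0 ?simplex_le1.
by have := sqr_ge0 m; lra.
Qed.

Lemma cov_norm2_le s v g : in_simplex s -> norm2 v <= 1 -> `|cov s v g| <= norm2 g.
Proof.
move=> sS v1; have [s0 _] := sS.
rewrite -ler_sqr ?nnegrE ?sqrtr_ge0 // real_normK ?num_real // norm2_sqr.
have g2 : \sum_(k < n) s 0 k * g 0 k ^+ 2 <= \sum_(k < n) g 0 k ^+ 2.
  by apply: ler_sum => k _; rewrite ler_piMl ?sqr_ge0 ?simplex_le1.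
have v2 : \sum_(k < n) s 0 k * (v 0 k - dotv s v) ^+ 2 <= 1.
  by rewrite (le_trans (variance_le_sum_sqr _ sS)) // -norm2_sqr expr_le1 ?sqrtr_ge0.
rewrite cov_centered; apply: le_trans (weighted_cauchy_schwarz
  (fun k => v 0 k - dotv s v) (fun k => g 0 k) s0) _.
by rewrite -[leRHS]mul1r ler_pM ?sumr_ge0 // => k _; rewrite mulr_ge0 ?sqr_ge0.
Qed.
End Covariance.

Section Softmax.
Variables (R : realType) (n : nat).
Implicit Types (b g v : 'rV[R]_n).

Definition sumexp b := \sum_(k < n) expR (b 0 k).
Definition lse b := ln (sumexp b).
Definition softmax b : 'rV[R]_n := \row_k (expR (b 0 k) / sumexp b).
Hypothesis n_gt0 : (0 < n)%N.

Lemma sumexp_gt0 b : 0 < sumexp b.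
Proof.
rewrite /sumexp (bigD1 (Ordinal n_gt0)) //= ltr_pwDl ?expR_gt0 //.
by apply: sumr_ge0 => k _; exact: expR_ge0.
Qed.

Lemma softmax_simplex b : in_simplex (softmax b).
Proof.
split=> [k|]; first by rewrite mxE divr_ge0 ?expR_ge0 ?ltW ?sumexp_gt0.
rewrite -[RHS](divff (lt0r_neq0 (sumexp_gt0 b))) mulr_suml.
by apply: eq_bigr => k _; rewrite mxE.
Qed.

Lemma lse_convex a b t : 0 <= t -> t <= 1 ->
  lse (t *: a + (1 - t) *: b) <= t * lse a + (1 - t) * lse b.
Proof.
move=> t0 t1; rewrite /lse.
set La := ln (sumexp a); set Lb := ln (sumexp b).
have ea k : expR (a 0 k) / sumexp a = expR (a 0 k - La).
  by rewrite expRB lnK ?posrE ?sumexp_gt0.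
have eb k : expR (b 0 k) / sumexp b = expR (b 0 k - Lb).
  by rewrite expRB lnK ?posrE ?sumexp_gt0.
(* Pointwise convexity of expR at the normalized terms, which sum to 1. *)
rewrite -[leRHS]expRK ler_ln ?posrE ?expR_gt0 ?sumexp_gt0 //.
apply: (@le_trans _ _ (\sum_(k < n) expR (t * La + (1 - t) * Lb) *
    (t * (expR (a 0 k) / sumexp a) + (1 - t) * (expR (b 0 k) / sumexp b)))).
  apply: ler_sum => k _; rewrite !mxE ea eb.
  have -> : t * a 0 k + (1 - t) * b 0 k =
      (t * La + (1 - t) * Lb) + (t * (a 0 k - La) + (1 - t) * (b 0 k - Lb)) by ring.
  rewrite [leLHS]expRD ler_wpM2l ?expR_ge0 //.
  exact: (@convex_expR _ (Itv01 t0 t1)).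
rewrite -mulr_sumr big_split /= -!mulr_sumr -!mulr_suml.
by rewrite !divff ?lt0r_neq0 ?sumexp_gt0 // !mulr1 subrKC mulr1.
Qed.

Lemma is_derive_expR_line b g k (t : R) :
  is_derive t 1 (fun s => expR ((b + s *: g) 0 k)) (expR ((b + t *: g) 0 k) * g 0 k).
Proof.
have -> : (fun s => expR ((b + s *: g) 0 k)) = expR \o (fun s => b 0 k + g 0 k * s).
  by apply/funext => s; rewrite /= !mxE mulrC.
have := @is_derive1_comp R expR _ t _ _ (is_derive_expR _)
  (is_derive_affine (b 0 k) (g 0 k) t).
by rewrite !mxE [t * _]mulrC.
Qed.

Lemma is_derive_sumexp_line b g (t : R) :
  is_derive t 1 (fun s => sumexp (b + s *: g))
    (\sum_(k < n) expR ((b + t *: g) 0 k) * g 0 k).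
Proof. exact: is_derive_sumr (fun k => is_derive_expR_line b g k t). Qed.

Lemma is_derive_weighted_sumexp_line b g (F : 'I_n -> R) (t : R) :
  is_derive t 1 (fun s => \sum_(k < n) F k * expR ((b + s *: g) 0 k))
    (\sum_(k < n) F k * (expR ((b + t *: g) 0 k) * g 0 k)).
Proof.
apply: is_derive_sumr => k.
exact (is_deriveZ (F k) (is_derive_expR_line b g k t)).
Qed.

Lemma sum_softmaxM b (F : 'I_n -> R) :
  \sum_(k < n) softmax b 0 k * F k = (\sum_(k < n) F k * expR (b 0 k)) / sumexp b.
Proof. by rewrite mulr_suml; apply: eq_bigr => k _; rewrite mxE; ring. Qed.

Lemma differentiable_lse b : differentiable lse b.
Proof.
change (differentiable (@ln R \o sumexp) b); apply: differentiable_comp.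
  apply: differentiable_sumr => k.
  apply: (differentiable_comp (differentiable_coord _ 0 k)).
  exact/derivable1_diffP/derivable_expR.
by apply/derivable1_diffP; case: (is_derive1_ln (sumexp_gt0 b)).
Qed.

Lemma is_derive_lse_line b g (t : R) :
  is_derive t 1 (fun s => lse (b + s *: g)) (dotv (softmax (b + t *: g)) g).
Proof.
have := is_derive1_comp (is_derive1_ln (sumexp_gt0 (b + t *: g)))
  (is_derive_sumexp_line b g t).
move/is_derive_eq; apply; rewrite /dotv sum_softmaxM mulrC.
by congr (_ / _); apply: eq_bigr => k _; rewrite mulrC.
Qed.

Lemma is_derive_dotv_softmax_line b g v (t : R) :
  is_derive t 1 (fun s => dotv (softmax (b + s *: g)) v)
    (cov (softmax (b + t *: g)) v g).
Proof.
have -> : (fun s => dotv (softmax (b + s *: g)) v) = (fun s =>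
    (\sum_(k < n) v 0 k * expR ((b + s *: g) 0 k)) * (sumexp (b + s *: g))^-1).
  by apply/funext => s; rewrite /dotv sum_softmaxM.
have S0 := lt0r_neq0 (sumexp_gt0 (b + t *: g)).
move: (is_deriveM (is_derive_weighted_sumexp_line b g (v 0) t)
  (is_deriveV S0 (is_derive_sumexp_line b g t))) => /is_derive_eq; apply.
rewrite /cov /dotv !sum_softmaxM.
set bt := b + t *: g.
have -> : \sum_(k < n) v 0 k * (expR (bt 0 k) * g 0 k) =
    \sum_(k < n) v 0 k * g 0 k * expR (bt 0 k) by apply: eq_bigr => k _; ring.
have -> : \sum_(k < n) expR (bt 0 k) * g 0 k = \sum_(k < n) g 0 k * expR (bt 0 k).
  by apply: eq_bigr => k _; rewrite mulrC.
by rewrite /GRing.scale /=; field.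
Qed.

Lemma dotv_softmax_mvt b b' v : exists t : R,
  dotv (softmax b') v - dotv (softmax b) v =
  cov (softmax (b + t *: (b' - b))) v (b' - b).
Proof.
pose f s := dotv (softmax (b + s *: (b' - b))) v.
have df (s : R) : is_derive s 1 f (cov (softmax (b + s *: (b' - b))) v (b' - b)).
  exact: is_derive_dotv_softmax_line.
have fc : {within `[0, 1], continuous f}.
  apply/continuous_subspaceT => s.
  by apply/differentiable_continuous/derivable1_diffP; case: (df s).
have [t _ ft] := MVT_segment ler01 (fun s _ => df s) fc.
exists t; move: ft; rewrite /f scale0r addr0 scale1r subrKC => ->.
by rewrite subr0 mulr1.
Qed.
End Softmax.

Section Phi.
Variables (R : realType) (n : nat) (eta : R) (C : 'M[R]_n) (q p : 'rV[R]_n) (i : 'I_n).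
Hypotheses (n_gt0 : (0 < n)%N) (eta_gt0 : 0 < eta) (p_ge0 : 0 <= p 0 i).
Implicit Types (x y v : 'rV[R]_n).

Local Notation phi_i := (phi eta C q p i).
Local Notation c := (n%:R * p 0 i).

Definition logit x : 'rV[R]_n := \row_k ((x 0 k - C i k - eta) / eta).

Lemma phiE x :
  phi_i x = c * (- dotv q x - eta * ln (p 0 i) + eta * lse (logit x) + eta).
Proof. by rewrite /Defs.phi /lse /sumexp; under [in RHS]eq_bigr do rewrite mxE. Qed.

Lemma logit_line x v (t : R) : logit (t *: v + x) = logit x + t *: (eta^-1 *: v).
Proof. by apply/rowP => k; rewrite !mxE; field; rewrite gt_eqF. Qed.

Lemma logitB x y : logit x - logit y = eta^-1 *: (x - y).
Proof. by apply/rowP => k; rewrite !mxE; field; rewrite gt_eqF. Qed.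

Lemma logit_conv x y (t : R) :
  logit (t *: x + (1 - t) *: y) = t *: logit x + (1 - t) *: logit y.
Proof. by apply/rowP => k; rewrite !mxE; field; rewrite gt_eqF. Qed.

Lemma is_derive_phi x v : is_derive x v phi_i (c * dotv (softmax (logit x) - q) v).
Proof.
apply: is_derive_line.
set K := - dotv q x - eta * ln (p 0 i) + eta.
have -> : (fun t => phi_i (t *: v + x)) = (fun t => c * ((K + - dotv q v * t)
    + eta * lse (logit x + t *: (eta^-1 *: v)))).
  by apply/funext => t; rewrite phiE logit_line dotvDr dotvZr /K; ring.
have H := is_deriveZ c (is_deriveD (is_derive_affine K (- dotv q v) 0)
    (is_deriveZ eta (is_derive_lse_line n_gt0 (logit x) (eta^-1 *: v) 0))).
apply: (is_derive_eq H).
by rewrite scale0r addr0 dotvZr dotvBl /GRing.scale /=; field; rewrite gt_eqF.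
Qed.

Lemma grad_phi x : grad phi_i x = c *: (softmax (logit x) - q).
Proof.
apply/rowP => j; rewrite !mxE.
by case: (is_derive_phi x (delta_mx 0 j)) => _ ->; rewrite dotv_delta !mxE.
Qed.

Lemma dotv_grad_phiB x y v : exists2 s, in_simplex s &
  dotv (grad phi_i x - grad phi_i y) v = c / eta * cov s v (x - y).
Proof.
have [t] := dotv_softmax_mvt n_gt0 (logit y) (logit x) v.
rewrite logitB covZr => mvt.
exists (softmax (logit y + t *: (eta^-1 *: (x - y)))); first exact: softmax_simplex.
rewrite !grad_phi dotvBl !dotvZl !dotvBl -[c / eta * _]mulrA -mvt; ring.
Qed.

Lemma phi_convex : convex_fun phi_i.
Proof.
move=> x y t t0 t1; rewrite !phiE logit_conv dotvDr !dotvZr.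
have := lse_convex n_gt0 (logit x) (logit y) t0 t1.
set Lt := lse _; set Lx := lse _; set Ly := lse _ => Hl.
have : 0 <= c * eta * (t * Lx + (1 - t) * Ly - Lt).
  by rewrite !mulr_ge0 ?ler0n ?subr_ge0 // ltW.
lra.
Qed.

Lemma differentiable_logit x : differentiable logit x.
Proof.
have -> : logit = fun y => eta^-1 *: (y - \row_k (C i k + eta)).
  by apply/funext => y; apply/rowP => k; rewrite !mxE; field; rewrite gt_eqF.
exact/differentiableZ/differentiableB.
Qed.

Lemma differentiable_phi x : differentiable phi_i x.
Proof.
have -> : phi_i = fun y =>
    c * (- dotv q y - eta * ln (p 0 i) + eta * lse (logit y) + eta).
  by apply/funext => y; rewrite phiE.
apply: differentiableM; first exact: differentiable_cst.
apply: differentiableD => //; apply: differentiableD.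
  by apply: differentiableB => //; exact/differentiableN/differentiable_dotv.
apply: differentiableM => //.
exact: (differentiable_comp (differentiable_logit x) (differentiable_lse n_gt0 _)).
Qed.

Lemma phi_smooth_norm2 : smooth_wrt (@norm2 R n) (c / eta) phi_i.
Proof.
split; [exact: phi_convex | exact: differentiable_phi | move=> x y].
apply: dual_norm_le => [|v v1]; first by rewrite norm20.
have [s sS ->] := dotv_grad_phiB x y v.
apply: ler_wpM2l; first exact: divr_ge0 (mulr_ge0 (ler0n _ _) p_ge0) (ltW eta_gt0).
exact: le_trans (ler_norm _) (cov_norm2_le _ sS v1).
Qed.

Lemma phi_smooth_norminf : smooth_wrt (@norminf R n) (5 * n%:R * p 0 i / eta) phi_i.
Proof.
split; [exact: phi_convex | exact: differentiable_phi | move=> x y].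
apply: dual_norm_le => [|v v1]; first by rewrite norminf0.
have [s sS ->] := dotv_grad_phiB x y v.
(* The covariance bound gives the constant 2, better than the stated 5. *)
have -> : 5 * n%:R * p 0 i / eta * norminf (x - y) =
    c / eta * (5 * norminf (x - y)) by ring.
apply: ler_wpM2l; first exact: divr_ge0 (mulr_ge0 (ler0n _ _) p_ge0) (ltW eta_gt0).
apply: le_trans (ler_norm _) (le_trans (cov_norminf_le _ sS v1) _).
by rewrite ler_wpM2r ?norminf_ge0 // ler_nat.
Qed.
End Phi.

Theorem lemma1 (R : realType) (n : nat) (eta : R) (C : 'M[R]_n)
    (q p : 'rV[R]_n) :
  (0 < n)%N -> 0 < eta ->
  (forall i j, 0 <= C i j) ->
  in_simplex q -> in_simplex p ->
  (forall j, 0 < q 0 j) -> (forall j, 0 < p 0 j) ->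
  forall i : 'I_n,
    smooth_wrt (@norm2 R n) (n%:R * p 0 i / eta) (phi eta C q p i) /\
    smooth_wrt (@norminf R n) (5 * n%:R * p 0 i / eta) (phi eta C q p i).
Proof.
move=> n_gt0 eta_gt0 _ _ _ _ p_gt0 i; have p_ge0 := ltW (p_gt0 i).
by split; [exact: phi_smooth_norm2 | exact: phi_smooth_norminf].
Qed.
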